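(* For $k\in\mathbb N$ let $\overline Y^k_t:=(Y_t\wedge k)\vee(-k)$, $t\in[0,T]$. If $Y^*\in\mathcal L^1(\mathcal Q)$ and $\rho_{\mathcal Q}$ is continuous from above at $0$, then $$\lim_{k\to\infty}\sup_{\mathrm Q\in\overline{\mathcal Q}}\Big|\sup_{\tau\in\mathcal T}\mathbb E_{\mathrm Q}[Y_\tau]-\sup_{\tau\in\mathcal T}\mathbb E_{\mathrm Q}[\overline Y^k_\tau]\Big|=0.$$
   Context: Let $(\Omega,\mathcal F,(\mathcal F_t)_{0\le t\le T},\mathrm P)$ be a filtered probability space ($0<T<\infty$) with right-continuous filtration, $\mathcal F=\mathcal F_T$, $\mathcal F_0$ trivial and containing all $\mathrm P$-null sets. $\mathcal T$ is the set of stopping times $\tau\le T$. $\mathcal Q$ is a nonempty set of probability measures on $\mathcal F$, each absolutely continuous w.r.t. $\mathrm P$. $\mathcal L^1(\mathcal Q)$ is the set of random variables $X$ with $\sup_{\mathrm Q\in\mathcal Q}\mathbb E_{\mathrm Q}[|X|]<\infty$. $Y=(Y_t)_{0\le t\le T}$ is a right-continuous adapted process with bounded paths, quasi left-uppersemicontinuous w.r.t. $\mathrm P$, and $Y^*:=\sup_{t\in[0,T]}|Y_t|$. $\mathcal X$ is the set of random variables $X$ with $|X|\le C(Y^*+1)$ $\mathrm P$-a.s. for some $C>0$; $\rho_{\mathcal Q}(X)=\sup_{\mathrm Q\in\mathcal Q}\mathbb E_{\mathrm Q}[X]$ for $X\in\mathcal X$; $\rho_{\mathcal Q}$ is continuous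 from above at $0$ if $\rho_{\mathcal Q}(X_n)\searrow0$ whenever $X_n\in\mathcal X$, $X_n\searrow0$ $\mathrm P$-a.s. $\overline{\mathcal Q}$ is the set of probability measures $\mathrm Q$ on $\mathcal F$ such that every $X\in\mathcal X$ is $\mathrm Q$-integrable and $\mathbb E_{\mathrm Q}[X]\le\rho_{\mathcal Q}(X)$ for all $X\in\mathcal X$. *)

From HB Require Import structures.
From mathcomp Require Import all_boot all_order all_algebra.
From mathcomp Require Import all_classical all_reals all_analysis.
Set Implicit Arguments. Unset Strict Implicit. Unset Printing Implicit Defensive.
Import Order.TTheory GRing.Theory Num.Theory.
Import numFieldNormedType.Exports.
Local Open Scope classical_set_scope.
Local Open Scope ring_scope.

Section defs.
Context {d : measure_display} {Omega : measurableType d} {R : realType}.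

Definition filtration_std (P : probability Omega R) (T : R)
    (Ft : R -> set (set Omega)) : Prop :=
  [/\ (forall t, 0 <= t <= T -> sigma_algebra setT (Ft t)),
      (forall t, 0 <= t <= T -> Ft t `<=` measurable),
      (forall s t, 0 <= s -> s <= t -> t <= T -> Ft s `<=` Ft t) &
      (forall t, 0 <= t < T -> Ft t = \bigcap_(s in `]t, T]) Ft s)] /\
  [/\ Ft T = measurable,
      (forall A, Ft 0 A -> P A = 0%E \/ P A = 1%E) &
      (forall A, measurable A -> P A = 0%E -> Ft 0 A)].

Definition stopping_time (T : R) (Ft : R -> set (set Omega))
    (tau : Omega -> R) : Prop :=
  (forall w, 0 <= tau w <= T) /\
  (forall t, 0 <= t <= T -> Ft t [set w | tau w <= t]).

Definition stopping_times (T : R) (Ft : R -> set (set Omega)) :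
  set (Omega -> R) := [set tau | stopping_time T Ft tau].

Definition stopped (Y : R -> Omega -> R) (tau : Omega -> R) : Omega -> R :=
  fun w => Y (tau w) w.

Definition adapted (T : R) (Ft : R -> set (set Omega))
    (Y : R -> Omega -> R) : Prop :=
  forall t, 0 <= t <= T ->
    forall B : set R, measurable B -> Ft t (Y t @^-1` B).

Definition right_continuous_paths (T : R) (Y : R -> Omega -> R) : Prop :=
  forall w t, 0 <= t < T -> (Y ^~ w) x @[x --> t^'+] --> Y t w.

Definition bounded_paths (T : R) (Y : R -> Omega -> R) : Prop :=
  forall w, exists M : R, forall t, 0 <= t <= T -> `|Y t w| <= M.

Definition quasi_left_usc (P : probability Omega R) (T : R)
    (Ft : R -> set (set Omega)) (Y : R -> Omega -> R) : Prop :=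
  forall (taun : nat -> Omega -> R) (tau : Omega -> R),
    (forall n, stopping_time T Ft (taun n)) -> stopping_time T Ft tau ->
    (forall n w, taun n w <= taun n.+1 w) ->
    (forall w, taun ^~ w @ \oo --> tau w) ->
    {ae P, forall w, (limn_esup (fun n => (stopped Y (taun n) w)%:E)
                       <= (stopped Y tau w)%:E)%E}.

Definition Ystar (T : R) (Y : R -> Omega -> R) : Omega -> R :=
  fun w => sup [set `|Y t w| | t in `[0, T]].

Definition calX (P : probability Omega R) (T : R) (Y : R -> Omega -> R) :
  set (Omega -> R) :=
  [set X : Omega -> R | measurable_fun setT X /\
           exists C : R, 0 < C /\
             {ae P, forall w, `|X w| <= C * (Ystar T Y w + 1)}].

Definition rhoQ (QQ : set (probability Omega R)) (X : Omega -> R) : \bar R :=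
  ereal_sup [set (\int[Q]_w (X w)%:E)%E | Q in QQ].

Definition cont_from_above_at0 (P : probability Omega R) (T : R)
    (Y : R -> Omega -> R) (QQ : set (probability Omega R)) : Prop :=
  forall Xn : nat -> Omega -> R,
    (forall n, calX P T Y (Xn n)) ->
    {ae P, forall w, (forall n, Xn n.+1 w <= Xn n w) /\ Xn ^~ w @ \oo --> 0} ->
    (forall n, (rhoQ QQ (Xn n.+1) <= rhoQ QQ (Xn n))%E) /\
    rhoQ QQ \o Xn @ \oo --> 0%E.

Definition Qbar (P : probability Omega R) (T : R) (Y : R -> Omega -> R)
    (QQ : set (probability Omega R)) : set (probability Omega R) :=
  [set Q | forall X, calX P T Y X ->
      Q.-integrable setT (EFin \o X) /\
      (\int[Q]_w (X w)%:E <= rhoQ QQ X)%E].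

Definition Ytrunc (k : nat) (Y : R -> Omega -> R) : R -> Omega -> R :=
  fun t w => Num.max (Num.min (Y t w) k%:R) (- k%:R).

Definition optstop (T : R) (Ft : R -> set (set Omega))
    (Q : probability Omega R) (Y : R -> Omega -> R) : \bar R :=
  ereal_sup [set (\int[Q]_w (stopped Y tau w)%:E)%E
            | tau in stopping_times T Ft].

End defs.

From HB Require Import structures.
From mathcomp Require Import all_boot all_order all_algebra.
From mathcomp Require Import all_classical all_reals all_analysis.
From mathcomp Require Import measurable_realfun ring lra.
Import Order.TTheory GRing.Theory Num.Theory.
Import numFieldNormedType.Exports.
Local Open Scope classical_set_scope.
Local Open Scope ring_scope.

(** Truncation at level k changes Y_tau by at most the excess (Y^* - k)^+ of the
    running maximum, for every stopping time tau.  Hence for every Q in Qbar the two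
    optimal stopping values differ by at most E_Q[(Y^* - k)^+] <= rho_Q((Y^* - k)^+),
    and this bound tends to 0 by continuity from above, since (Y^* - k)^+ decreases
    to 0.  The measurability of Y_tau and of Y^* needed to make sense of these
    expectations comes from right-continuity: times are approximated from above on
    the grids jT/(n+1). *)

Section ereal_sup_dist.
Local Open Scope ereal_scope.
Context {R : realType} {I : Type}.
Implicit Types (S : set I) (f g : I -> \bar R).

Lemma abse_subr_le (x y e : \bar R) :
  x \is a fin_num -> y \is a fin_num -> e \is a fin_num ->
  x <= y + e -> y <= x + e -> `|x - y| <= e.
Proof.
move=> /fineK <- /fineK <- /fineK <-; rewrite -!EFinD abse_EFin !lee_fin => ? ?.
by rewrite ler_norml; apply/andP; split; lra.
Qed.

Lemma ereal_sup_le_addr S f g (e : \bar R) :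
  (forall i, S i -> f i <= g i + e) -> ereal_sup (f @` S) <= ereal_sup (g @` S) + e.
Proof.
move=> fge; apply: ge_ereal_sup => _ [i Si <-].
by apply: le_trans (fge i Si) _; apply/leeD2r/ereal_sup_ubound; exists i.
Qed.

Lemma ereal_sup_fin_num S f (c : \bar R) : S !=set0 -> c \is a fin_num ->
  (forall i, S i -> f i \is a fin_num /\ f i <= c) ->
  ereal_sup (f @` S) \is a fin_num.
Proof.
move=> [i0 Si0] /fin_numPlt/andP[_ clt] fS; apply/fin_numPlt/andP; split.
  have [/fin_numPlt/andP[fi0 _] _] := fS i0 Si0.
  by apply: lt_le_trans fi0 _; apply: ereal_sup_ubound; exists i0.
by apply: le_lt_trans clt; apply: ge_ereal_sup => _ [i Si <-]; case: (fS i Si).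
Qed.

Lemma ereal_sup_dist_le S f g (e c : \bar R) :
  S !=set0 -> e \is a fin_num -> c \is a fin_num ->
  (forall i, S i -> [/\ f i \is a fin_num, g i \is a fin_num,
                        f i <= c, g i <= c & `|f i - g i| <= e]) ->
  `|ereal_sup (f @` S) - ereal_sup (g @` S)| <= e.
Proof.
move=> S0 efin cfin fgS.
have ffin : ereal_sup (f @` S) \is a fin_num.
  by apply: ereal_sup_fin_num cfin _ => // i /fgS[].
have gfin : ereal_sup (g @` S) \is a fin_num.
  by apply: ereal_sup_fin_num cfin _ => // i /fgS[].
apply: abse_subr_le => //; apply: ereal_sup_le_addr => i /fgS[+ + _ _];
  move=> /fineK <- /fineK <-; rewrite -(fineK efin) -!EFinD abse_EFin !lee_fin;
  by rewrite ler_norml => /andP[? ?]; lra.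
Qed.

End ereal_sup_dist.

Section clamp.
Context {R : realFieldType}.
Implicit Types y z c : R.

Lemma norm_clamp_le y c : 0 <= c -> `|Num.max (Num.min y c) (- c)| <= `|y|.
Proof.
move=> c0; have [y0|y0] := leP 0 y; [rewrite (ger0_norm y0)|rewrite (ltr0_norm y0)];
by have [] := leP y c; have [] := leP y (- c); have [] := leP c (- c);
  rewrite ler_norml => *; apply/andP; split; lra.
Qed.

Lemma norm_sub_clamp_le y z c : 0 <= c -> `|y| <= z ->
  `|y - Num.max (Num.min y c) (- c)| <= Num.max (z - c) 0.
Proof.
move=> c0 /ler_normlP[? ?]; have [] := leP (z - c) 0;
by have [] := leP y c; have [] := leP y (- c); have [] := leP c (- c);
  rewrite ler_norml => *; apply/andP; split; lra.
Qed.

End clamp.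

Section upper_grid.
Context {R : realType}.
Variable T : R.
Hypothesis T0 : 0 < T.

Definition grid (n j : nat) : R := j%:R * T / n.+1%:R.

(* The smallest grid point jT/(n+1) that is >= s. *)
Definition upper_grid (n : nat) (s : R) : R :=
  (Num.ceil (s * n.+1%:R / T))%:~R * T / n.+1%:R.

Lemma grid_itv n j : (j < n.+2)%N -> 0 <= grid n j <= T.
Proof.
move=> jn; apply/andP; split; first by rewrite /grid divr_ge0 ?mulr_ge0 // ltW.
by rewrite /grid ler_pdivrMr // [T * _]mulrC ler_pM2r // ler_nat -ltnS.
Qed.

Lemma upper_grid_ge n s : s <= upper_grid n s.
Proof.
by rewrite ler_pdivlMr // -ler_pdivrMr // ceil_ge.
Qed.

Lemma upper_grid_lt n s : upper_grid n s < s + T / n.+1%:R.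
Proof.
have TN : 0 < T / n.+1%:R by rewrite divr_gt0.
have -> : s + T / n.+1%:R = (s * n.+1%:R / T + 1) * (T / n.+1%:R).
  by field; rewrite !gt_eqF.
rewrite /upper_grid -mulrA ltr_pM2r //.
by have := ceilB1_lt (s * n.+1%:R / T); rewrite intrD /=; lra.
Qed.

Lemma upper_gridT n : upper_grid n T = T.
Proof.
rewrite /upper_grid [T * _ / T]mulrAC divff ?gt_eqF // mul1r (intrKceil n.+1%:Z).
by rewrite -pmulrn mulrAC divff ?pnatr_eq0 // mul1r.
Qed.

Lemma upper_grid_onto n s : 0 <= s <= T ->
  exists2 j, (j < n.+2)%N & upper_grid n s = grid n j.
Proof.
move=> /andP[s0 sT]; rewrite /upper_grid; set x := s * n.+1%:R / T.
have xn : Num.ceil x <= n.+1%:Z.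
  by rewrite ceil_le_int -pmulrn ler_pdivrMr // [_ * T]mulrC ler_pM2r.
have x0 : 0 <= x by rewrite divr_ge0 ?mulr_ge0 // ltW.
have : 0 <= Num.ceil x by rewrite ceil_ge0 (lt_le_trans _ x0) ?ltrN10.
by case: (Num.ceil x) xn => // j jn _; exists j.
Qed.

Lemma nondecreasing_upper_grid n : nondecreasing_fun (upper_grid n).
Proof.
move=> x y xy; rewrite /upper_grid ler_pM2r ?invr_gt0 ?ltr0Sn // ler_pM2r //.
by rewrite ler_int le_ceil // ler_pM2r ?invr_gt0 // ler_pM2r ?ltr0Sn.
Qed.

Lemma cvg_upper_grid s : upper_grid n s @[n --> \oo] --> s.
Proof.
apply/cvgrPdist_lt => e e0; have eT : 0 < e / T by rewrite divr_gt0.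
apply: filterS (near_infty_natSinv_lt (PosNum eT)) => n /= nT.
rewrite distrC ger0_norm ?subr_ge0 ?upper_grid_ge // ltrBlDl.
apply: lt_le_trans (upper_grid_lt n s) _; rewrite lerD2l ler_pdivrMr ?ltr0Sn //.
by move: nT; rewrite ltr_pdivlMr // mulrC ltr_pdivrMr ?ltr0Sn // => /ltW.
Qed.

End upper_grid.

Section measurable_real_functions.
Context {d : measure_display} {Omega : measurableType d} {R : realType}.

Lemma measurable_fun_bigmaxr (I : Type) (r : seq I) (F : I -> Omega -> R) :
  (forall i, measurable_fun setT (F i)) ->
  measurable_fun setT (fun w => \big[Num.max/0]_(i <- r) F i w).
Proof.
move=> mF; elim: r => [|i r IH].
  by under eq_fun do rewrite big_nil; exact: measurable_cst.
by under eq_fun do rewrite big_cons; exact: measurable_maxr.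
Qed.

Lemma measurable_fun_le_sets (f : Omega -> R) :
  (forall a, measurable [set w | f w <= a]) -> measurable_fun setT f.
Proof.
move=> mf; apply: (measurability _ (RGenOInfty.measurableE R)) => _ [_ [a ->] <-].
rewrite setTI (_ : f @^-1` _ = ~` [set w | f w <= a]); first exact/measurableC/mf.
by apply/seteqP; split => w /=; rewrite in_itv /= andbT ltNge; case: (f w <= a).
Qed.

Lemma measurable_stopped_countable_range (Y : R -> Omega -> R) (f : Omega -> R)
    (c : nat -> R) (J : set nat) :
  measurable_fun setT f -> (forall w, exists2 j, J j & f w = c j) ->
  (forall j, J j -> measurable_fun setT (Y (c j))) ->
  measurable_fun setT (stopped Y f).
Proof.
move=> mf fc mY _ B mB; rewrite setTI.
have -> : stopped Y f @^-1` B =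
    \bigcup_(j in J) (f @^-1` [set c j] `&` Y (c j) @^-1` B).
  apply/seteqP; split => [w Bw|w [j _ [/= fw]]]; last by rewrite /preimage /stopped fw.
  by have [j Jj fw] := fc w; exists j => //; split; rewrite /= -?fw.
apply: bigcup_measurable => j Jj; apply: measurableI.
- by rewrite -[X in measurable X]setTI; exact: mf.
- by rewrite -[X in measurable X]setTI; exact: mY.
Qed.

End measurable_real_functions.

Section stopping_times.
Context {d : measure_display} {Omega : measurableType d} {R : realType}.
Context {T : R} {Ft : R -> set (set Omega)}.
Hypothesis Ft_meas : forall t, 0 <= t <= T -> Ft t `<=` measurable.

Lemma stopping_time_measurable tau :
  stopping_time T Ft tau -> measurable_fun setT tau.
Proof.
move=> [tau_itv tau_le]; apply: measurable_fun_le_sets => a.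
have [a0|a0] := ltP a 0.
  rewrite (_ : [set w | tau w <= a] = set0) //; apply/seteqP; split => w //=.
  by have /andP[? ?] := tau_itv w; lra.
have [Ta|aT] := leP T a.
  rewrite (_ : [set w | tau w <= a] = setT) //; apply/seteqP; split => w //= _.
  by have /andP[? ?] := tau_itv w; lra.
have a_itv : 0 <= a <= T by rewrite a0 ltW.
exact: Ft_meas a_itv _ (tau_le a a_itv).
Qed.

Lemma adapted_measurable {Y : R -> Omega -> R} : adapted T Ft Y ->
  forall t, 0 <= t <= T -> measurable_fun setT (Y t).
Proof.
by move=> adY t tT _ B mB; rewrite setTI; exact: Ft_meas tT _ (adY t tT B mB).
Qed.

Lemma stopping_times_neq0 : 0 <= T -> (forall t, 0 <= t <= T -> Ft t setT) ->
  stopping_times T Ft !=set0.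
Proof.
move=> T0 Ft_setT; exists (fun=> 0); split => [w|t t_itv]; first by rewrite lexx.
rewrite (_ : [set w | 0 <= t] = setT); first exact: Ft_setT.
by apply/seteqP; split => // w _; case/andP: t_itv.
Qed.

End stopping_times.

Section paths.
Context {d : measure_display} {Omega : measurableType d} {R : realType}.
Context {T : R} {Y : R -> Omega -> R}.
Hypothesis T0 : 0 < T.
Hypothesis Y_meas : forall t, 0 <= t <= T -> measurable_fun setT (Y t).
Hypothesis Y_rc : right_continuous_paths T Y.

Lemma cvg_Y_upper_grid t w : 0 <= t <= T ->
  Y (upper_grid T n t) w @[n --> \oo] --> Y t w.
Proof.
move=> /andP[t0]; rewrite le_eqVlt => /orP[/eqP tT|tT].
  by rewrite tT; under eq_fun do rewrite (upper_gridT _ T0); exact: cvg_cst.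
have t_itv : 0 <= t < T by rewrite t0 tT.
have /cvgrPdist_lt Yt := Y_rc w t t_itv.
apply/cvgrPdist_lt => e e0; have [r /= r0 Ytr] := Yt e e0.
move: (cvg_upper_grid _ T0 t) => /cvgrPdist_lt /(_ r r0); apply: filterS => n tn.
have [->|tn'] := eqVneq (upper_grid T n t) t; first by rewrite subrr normr0.
by apply: Ytr => //; rewrite lt_neqAle eq_sym tn' upper_grid_ge.
Qed.

Lemma measurable_stopped (tau : Omega -> R) : measurable_fun setT tau ->
  (forall w, 0 <= tau w <= T) -> measurable_fun setT (stopped Y tau).
Proof.
move=> mtau tau_itv.
apply: (measurable_fun_cvg (h := fun n => stopped Y (upper_grid T n \o tau))).
  move=> n; apply: (measurable_stopped_countable_range _ _ (grid T n)
    (fun j => (j < n.+2)%N)).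
  - apply: measurableT_comp mtau.
    exact: nondecreasing_measurable (nondecreasing_upper_grid _ T0 n).
  - by move=> w; exact: upper_grid_onto.
  - by move=> j jn; apply: Y_meas; exact: grid_itv.
by move=> w _; exact: cvg_Y_upper_grid.
Qed.

Hypothesis Y_bnd : bounded_paths T Y.

Lemma has_sup_abs_path w : has_sup [set `|Y t w| | t in `[0, T]].
Proof.
rewrite set_itvcc; split; first by exists `|Y 0 w|, 0; rewrite //= lexx ltW.
by have [M YM] := Y_bnd w; exists M => _ [t tT <-]; exact: YM.
Qed.

Lemma Ystar_ub t w : 0 <= t <= T -> `|Y t w| <= Ystar T Y w.
Proof.
move=> tT; apply: (sup_upper_bound (has_sup_abs_path w)).
by exists t => //; rewrite set_itvcc.
Qed.

Lemma Ystar_ge0 w : 0 <= Ystar T Y w.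
Proof. by apply: le_trans (normr_ge0 _) (Ystar_ub 0 w _); rewrite lexx ltW. Qed.

Let grid_max n w := \big[Num.max/0]_(j < n.+2) `|Y (grid T n j) w|.

Lemma grid_max_le n w : grid_max n w <= Ystar T Y w.
Proof.
by apply: bigmax_le => [|j _]; [exact: Ystar_ge0 | apply/Ystar_ub/grid_itv].
Qed.

Lemma abs_Y_upper_grid_le n t w : 0 <= t <= T ->
  `|Y (upper_grid T n t) w| <= grid_max n w.
Proof.
by move=> /(upper_grid_onto _ T0 n)[j jn ->]; exact: (le_bigmax _ _ (Ordinal jn)).
Qed.

Lemma cvg_grid_max w : grid_max n w @[n --> \oo] --> Ystar T Y w.
Proof.
apply/cvgrPdist_lt => e e0.
have [_ [t tT <-] Yt] := sup_adherent e0 (has_sup_abs_path w).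
rewrite set_itvcc in tT.
have d0 : 0 < `|Y t w| - (Ystar T Y w - e) by rewrite subr_gt0.
have /cvg_norm /cvgrPdist_lt /(_ _ d0) := cvg_Y_upper_grid t w tT.
apply: filterS => n tn; rewrite ger0_norm ?subr_ge0 ?grid_max_le //.
have := grid_max_le n w; have := abs_Y_upper_grid_le n t w tT.
by have := ler_norm (`|Y t w| - `|Y (upper_grid T n t) w|); lra.
Qed.

Lemma measurable_Ystar : measurable_fun setT (Ystar T Y).
Proof.
apply: (measurable_fun_cvg (h := grid_max)); last by move=> w _; exact: cvg_grid_max.
move=> n; apply: measurable_fun_bigmaxr => j.
exact/measurableT_comp/Y_meas/grid_itv.
Qed.

End paths.

Definition excess {Omega : Type} {R : realDomainType} (X : Omega -> R) (c : R) :
  Omega -> R := fun w => Num.max (X w - c) 0.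

Section truncation_error.
Context {d : measure_display} {Omega : measurableType d} {R : realType}.
Context {T : R} {Ft : R -> set (set Omega)} {Y : R -> Omega -> R}.
Hypothesis T0 : 0 < T.
Hypothesis Ft_meas : forall t, 0 <= t <= T -> Ft t `<=` measurable.
Hypothesis Y_meas : forall t, 0 <= t <= T -> measurable_fun setT (Y t).
Hypothesis Y_rc : right_continuous_paths T Y.
Hypothesis Y_bnd : bounded_paths T Y.

Local Notation Ystar := (Ystar T Y).
Local Notation Xk k := (excess Ystar k%:R).

Lemma measurable_excess k : measurable_fun setT (Xk k).
Proof.
apply: measurable_maxr => //; apply: measurable_funB => //.
exact: measurable_Ystar.
Qed.

Lemma abs_excess_le k w : `|Xk k w| <= Ystar w.
Proof.
rewrite ger0_norm; last by rewrite /excess le_max lexx orbT.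
by rewrite /excess ge_max Ystar_ge0 // andbT gerBl.
Qed.

Lemma measurable_stopped_stopping_time {tau : Omega -> R} :
  stopping_time T Ft tau -> measurable_fun setT (stopped Y tau).
Proof.
move=> tau_st; apply: (measurable_stopped T0 Y_meas Y_rc).
- exact: (stopping_time_measurable Ft_meas).
- exact: tau_st.1.
Qed.

Lemma measurable_stopped_trunc k {tau : Omega -> R} : stopping_time T Ft tau ->
  measurable_fun setT (stopped (Ytrunc k Y) tau).
Proof.
move=> tau_st; apply: measurable_maxr => //; apply: measurable_minr => //.
exact: measurable_stopped_stopping_time.
Qed.

Lemma abs_stopped_le {tau : Omega -> R} : stopping_time T Ft tau ->
  forall w, `|stopped Y tau w| <= Ystar w.
Proof. by move=> tau_st w; apply: Ystar_ub => //; exact: tau_st.1. Qed.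

Lemma abs_stopped_trunc_le k {tau : Omega -> R} : stopping_time T Ft tau ->
  forall w, `|stopped (Ytrunc k Y) tau w| <= Ystar w.
Proof.
by move=> tau_st w; apply: le_trans (abs_stopped_le tau_st w); exact: norm_clamp_le.
Qed.

Lemma dist_stopped_trunc_le k {tau : Omega -> R} : stopping_time T Ft tau ->
  forall w, `|stopped Y tau w - stopped (Ytrunc k Y) tau w| <= Xk k w.
Proof. by move=> tau_st w; exact: norm_sub_clamp_le (abs_stopped_le tau_st w). Qed.

Section expectation.
Local Open Scope ereal_scope.
Variable Q : probability Omega R.
Hypothesis Q_Ystar : Q.-integrable setT (EFin \o Ystar).

Lemma integrable_le_Ystar (f : Omega -> R) : measurable_fun setT f ->
  (forall w, (`|f w| <= Ystar w)%R) -> Q.-integrable setT (EFin \o f).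
Proof.
move=> mf fY; apply: le_integrable Q_Ystar => //; first exact/measurable_EFinP.
by move=> w _ /=; rewrite lee_fin (ger0_norm (Ystar_ge0 T0 Y_bnd w)).
Qed.

Lemma expectation_stopped_trunc k tau : stopping_time T Ft tau ->
  let EY := \int[Q]_w (stopped Y tau w)%:E in
  let EYk := \int[Q]_w (stopped (Ytrunc k Y) tau w)%:E in
  [/\ EY \is a fin_num, EYk \is a fin_num,
      EY <= \int[Q]_w (Ystar w)%:E, EYk <= \int[Q]_w (Ystar w)%:E
    & `|EY - EYk| <= \int[Q]_w (Xk k w)%:E].
Proof.
move=> tau_st EY EYk.
have mY := measurable_stopped_stopping_time tau_st.
have mYk := measurable_stopped_trunc k tau_st.
have iY := integrable_le_Ystar _ mY (abs_stopped_le tau_st).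
have iYk := integrable_le_Ystar _ mYk (abs_stopped_trunc_le k tau_st).
have mdist : measurable_fun setT
    (fun w => stopped Y tau w - stopped (Ytrunc k Y) tau w)%R.
  exact: measurable_funB.
split; try exact: integrable_fin_num.
- apply: le_integral => // w _; rewrite lee_fin.
  exact: le_trans (ler_norm _) (abs_stopped_le tau_st w).
- apply: le_integral => // w _; rewrite lee_fin.
  exact: le_trans (ler_norm _) (abs_stopped_trunc_le k tau_st w).
- rewrite /EY /EYk -integralB_EFin //.
  apply: le_trans (le_abse_integral _ _ _) _ => //; first exact/measurable_EFinP.
  apply: ge0_le_integral => //.
  + exact/measurable_EFinP/measurableT_comp.
  + exact/measurable_EFinP/measurable_excess.
  + by move=> w _; rewrite lee_fin dist_stopped_trunc_le.
Qed.

Lemma dist_optstop_trunc_le k : stopping_times T Ft !=set0 ->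
  `|optstop T Ft Q Y - optstop T Ft Q (Ytrunc k Y)| <= \int[Q]_w (Xk k w)%:E.
Proof.
move=> st0; have iXk : Q.-integrable setT (EFin \o Xk k).
  exact: integrable_le_Ystar (measurable_excess k) (abs_excess_le k).
apply: ereal_sup_dist_le st0 (integrable_fin_num measurableT iXk)
  (integrable_fin_num measurableT Q_Ystar) _.
by move=> tau; exact: expectation_stopped_trunc.
Qed.

End expectation.

Section risk_measure.
Context {P : probability Omega R} {QQ : set (probability Omega R)}.

Lemma calX_le_Ystar (f : Omega -> R) : measurable_fun setT f ->
  (forall w, `|f w| <= Ystar w) -> calX P T Y f.
Proof.
move=> mf fY; split => //; exists 1; split => //; apply: aeW => w.
by rewrite mul1r (le_trans (fY w)) // lerDl.
Qed.

Lemma calX_Ystar : calX P T Y Ystar.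
Proof.
apply: calX_le_Ystar; first exact: measurable_Ystar.
by move=> w; rewrite ger0_norm ?Ystar_ge0.
Qed.

Lemma calX_excess k : calX P T Y (Xk k).
Proof. exact: calX_le_Ystar (measurable_excess k) (abs_excess_le k). Qed.

Lemma integrable_calX (Q : probability Omega R) (X : Omega -> R) : Q `<< P ->
  Q.-integrable setT (EFin \o Ystar) -> calX P T Y X -> Q.-integrable setT (EFin \o X).
Proof.
move=> QP iY [mX [C [C0 XC]]].
have XCQ : {ae Q, forall w, `|X w| <= C * (Ystar w + 1)}.
  case: XC => A [mA PA0 sub]; exists A; split => //.
  exact: (null_content_dominatesP _ _).1 QP A mA PA0.
have iC : Q.-integrable setT (EFin \o (fun w => C * (Ystar w + 1))).
  apply: eq_integrable measurableT _ _ _ (integrableZl measurableT C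
    (integrableD measurableT iY (finite_measure_integrable_cst Q 1 measurableT))).
  by move=> w _ /=; rewrite EFinM EFinD.
apply/integrableP; split; first exact/measurable_EFinP.
apply: le_lt_trans (integrable_lty measurableT iC).
apply: ae_ge0_le_integral => //.
- exact/measurable_EFinP/measurableT_comp.
- by move=> w _ /=; rewrite lee_fin mulr_ge0 ?addr_ge0 ?Ystar_ge0 // ltW.
- apply/measurable_EFinP/measurable_funM => //; apply: measurable_funD => //.
  exact: measurable_Ystar.
- by apply: filterS XCQ => w XCw _ /=; rewrite lee_fin.
Qed.

Lemma sub_Qbar : (forall Q, QQ Q -> Q `<< P) ->
  (forall Q, QQ Q -> Q.-integrable setT (EFin \o Ystar)) -> QQ `<=` Qbar P T Y QQ.
Proof.
move=> QP iY Q QQQ X cX; split; first exact: integrable_calX (QP Q QQQ) (iY Q QQQ) cX.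
by apply: ereal_sup_ubound; exists Q.
Qed.

Lemma cvg_rhoQ_excess : cont_from_above_at0 P T Y QQ ->
  rhoQ QQ (Xk k) @[k --> \oo] --> 0%E.
Proof.
move=> cont; apply: (cont (fun k => Xk k) calX_excess _).2.
apply: aeW => w; split => [k|].
  by rewrite /excess ge_max !le_max lexx orbT andbT lerB // ler_nat.
apply: cvg_near_cst; apply: filterS (nbhs_infty_ger (Ystar w)) => k Yk.
by rewrite /excess max_r // subr_le0.
Qed.

End risk_measure.

End truncation_error.

Theorem lemma6p3 (d : measure_display) (Omega : measurableType d)
  (R : realType) (P : probability Omega R) (T : R)
  (Ft : R -> set (set Omega)) (QQ : set (probability Omega R))
  (Y : R -> Omega -> R) :
  0 < T ->
  filtration_std P T Ft ->
  QQ !=set0 ->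
  (forall Q, QQ Q -> Q `<< P) ->
  adapted T Ft Y ->
  right_continuous_paths T Y ->
  bounded_paths T Y ->
  quasi_left_usc P T Ft Y ->
  (* Y^* in L^1(Q) *)
  (ereal_sup [set (\int[Q]_w `|Ystar T Y w|%:E)%E | Q in QQ] < +oo)%E ->
  cont_from_above_at0 P T Y QQ ->
  (fun k : nat =>
     ereal_sup [set (`| optstop T Ft Q Y - optstop T Ft Q (Ytrunc k Y) |)%E
               | Q in Qbar P T Y QQ])
    @ \oo --> 0%E.
Proof.
move=> T0 [[Ft_sigma Ft_meas _ _] _] [Q0 QQQ0] QP adY Y_rc Y_bnd _ YL1 cont.
have Y_meas := adapted_measurable Ft_meas adY.
have st0 : stopping_times T Ft !=set0.
  apply: stopping_times_neq0 (ltW T0) _ => t /Ft_sigma[Ft0 FtC _].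
  by have := FtC _ Ft0; rewrite setD0.
have QYstar Q : QQ Q -> Q.-integrable setT (EFin \o Ystar T Y).
  move=> QQQ; apply/integrableP; split; first exact/measurable_EFinP/measurable_Ystar.
  by apply: le_lt_trans YL1; apply: ereal_sup_ubound; exists Q.
have QQ_Qbar := sub_Qbar T0 Y_meas Y_rc Y_bnd QP QYstar.
apply: squeeze_cvge (cvg_cst 0%E) (cvg_rhoQ_excess T0 Y_meas Y_rc Y_bnd cont).
apply: nearW => k; apply/andP; split.
  (* Since [ereal_sup set0 = -oo], the lower bound needs an element of Qbar. *)
  apply: le_trans (abse_ge0 _) (ereal_sup_ubound _).
  by exists Q0 => //; exact: QQ_Qbar.
apply: ge_ereal_sup => _ [Q QbarQ <-].
have QbarYstar := (QbarQ _ (calX_Ystar T0 Y_meas Y_rc Y_bnd)).1.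
apply: le_trans (QbarQ _ (calX_excess T0 Y_meas Y_rc Y_bnd k)).2.
exact: (dist_optstop_trunc_le T0 Ft_meas Y_meas Y_rc Y_bnd Q QbarYstar k st0).
Qed.
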